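(* Let $G$ be a finite simple undirected graph, $r<s$ positive integers, and run set-k on $(G,r,s)$. For every positive integer $k$ for which the transition time $t_k$ is defined, every $k$-$(r,s)$-nucleus $\mathcal{S}$ of $G$ satisfies $\mathcal{S}\subseteq\mathcal{S}_{t_k}$.
   Context: A $K_r$ is an $r$-clique of $G$. For a set $\mathcal{S}$ of $K_s$s: $K_r(\mathcal{S})$ is the set of $K_r$s contained in some member of $\mathcal{S}$; the $\mathcal{S}$-degree of $R\in K_r(\mathcal{S})$ is the number of $S\in\mathcal{S}$ containing $R$; $R,R'$ are $\mathcal{S}$-connected if there is a sequence $R=R_1,\dots,R_m=R'$ in $K_r(\mathcal{S})$ with each $R_i\cup R_{i+1}$ contained in some $S\in\mathcal{S}$. A $k$-$(r,s)$-nucleus is a set $\mathcal{S}$ of $K_s$s, maximal under inclusion among those such that every $R\in K_r(\mathcal{S})$ has $\mathcal{S}$-degree $\ge k$ and any two members of $K_r(\mathcal{S})$ are $\mathcal{S}$-connected. Procedure set-k$(G,r,s)$: enumerate all $K_r$s and $K_s$s; initialize $\delta(R)$ to the number of $K_s$s containing $R$; all $K_r$s unprocessed. Repeat until all processed: pick an unprocessed $K_r$ $R$ with minimum current $\delta(R)$ (ties arbitrary); set $\kappa(R)=\delta(R)$; for each $K_s$ $S\ni R$ such that no $K_r\subset S$ is processed, and for each $K_r$ $R'\subset S$, $R'\neq R$, with $\delta(R')>\delta(R)$, decrease $\delta(R')$ by 1; mark $R$ processed. $R_i$ is the $i$-th processed $K_r$; ''time $t$'' is the beginning of the iteration processing $R_t$.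 The transition time $t_k$ is the unique index with $\kappa(R_{t_k})=k$ and ($t_k=1$ or $\kappa(R_{t_k-1})<k$). $\mathcal{S}_t$ is the set of $K_s$s all of whose $K_r$s are unprocessed at time $t$. *)

From mathcomp Require Import all_boot.
Set Implicit Arguments. Unset Strict Implicit. Unset Printing Implicit Defensive.

(* A finite simple undirected graph: vertex type T : finType, edge relation
   e : rel T, assumed symmetric and irreflexive in the theorem. *)

Section Cliques.
Variables (T : finType) (e : rel T).

Definition is_clique (A : {set T}) : bool :=
  [forall x in A, forall y in A, (x != y) ==> e x y].

Definition Kn (n : nat) : {set {set T}} :=
  [set A : {set T} | is_clique A && (#|A| == n)].

Definition KrOf (r : nat) (SS : {set {set T}}) : {set {set T}} :=
  [set R in Kn r | [exists S in SS, R \subset S]].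

Definition sdeg (SS : {set {set T}}) (R : {set T}) : nat :=
  #|[set S in SS | R \subset S]|.

Definition sadj (r : nat) (SS : {set {set T}}) : rel {set T} :=
  fun R R' => [&& R \in KrOf r SS, R' \in KrOf r SS &
                  [exists S in SS, (R :|: R') \subset S]].

Definition sconnected (r : nat) (SS : {set {set T}}) (R R' : {set T}) : bool :=
  connect (sadj r SS) R R'.

Definition nucleus_prop (k r s : nat) (SS : {set {set T}}) : Prop :=
  [/\ SS \subset Kn s,
      (forall R, R \in KrOf r SS -> k <= sdeg SS R) &
      (forall R R', R \in KrOf r SS -> R' \in KrOf r SS -> sconnected r SS R R')].

Definition is_nucleus (k r s : nat) (SS : {set {set T}}) : Prop :=
  nucleus_prop k r s SS /\
  (forall SS', nucleus_prop k r s SS' -> SS \subset SS' -> SS' = SS).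

Definition delta0 (s : nat) (R : {set T}) : nat :=
  #|[set S in Kn s | R \subset S]|.

Definition dec_count (r s : nat) (P : {set {set T}}) (R R' : {set T}) : nat :=
  #|[set S in Kn s | [&& R \subset S, R' \subset S &
        [forall Q in Kn r, (Q \subset S) ==> (Q \notin P)]]]|.

(* Update of delta when processing R (P = already processed K_r's, not
   containing R).  Each such S decreases delta(R') by one as long as the
   current delta(R') exceeds delta(R); the net effect is the closed form below. *)
Definition step (r s : nat) (P : {set {set T}}) (d : {set T} -> nat)
    (R : {set T}) : {set T} -> nat :=
  fun R' => if (R' \in Kn r) && (R' != R) && (d R < d R')
            then maxn (d R) (d R' - dec_count r s P R R')
            else d R'.

Definition state_after (r s : nat) (pre : seq {set T})
    : {set {set T}} * ({set T} -> nat) :=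
  foldl (fun pd R => (R |: pd.1, step r s pd.1 pd.2 R)) (set0, delta0 s) pre.

(* With processing order rs (R_{t+1} = nth set0 rs t, times 0-indexed):
   delta at time t (beginning of the iteration processing nth rs t) *)
Definition delta_at (r s : nat) (rs : seq {set T}) (t : nat) : {set T} -> nat :=
  (state_after r s (take t rs)).2.

Definition processed_at (r s : nat) (rs : seq {set T}) (t : nat) : {set {set T}} :=
  (state_after r s (take t rs)).1.

(* rs is a valid execution order of set-k: it enumerates every K_r exactly
   once, and at each time the chosen K_r has minimum current delta among the
   unprocessed K_r's (ties arbitrary). *)
Definition valid_run (r s : nat) (rs : seq {set T}) : Prop :=
  uniq rs /\ (forall R, (R \in rs) = (R \in Kn r)) /\
  forall t, t < size rs -> forall R', R' \in Kn r ->
    R' \notin processed_at r s rs t ->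
    delta_at r s rs t (nth set0 rs t) <= delta_at r s rs t R'.

Definition kappa (r s : nat) (rs : seq {set T}) (t : nat) : nat :=
  delta_at r s rs t (nth set0 rs t).

(* t is the transition time t_k (0-indexed) *)
Definition is_transition (r s : nat) (rs : seq {set T}) (k t : nat) : Prop :=
  t < size rs /\ kappa r s rs t = k /\ (t = 0 \/ kappa r s rs t.-1 < k).

Definition S_at (r s : nat) (rs : seq {set T}) (t : nat) : {set {set T}} :=
  [set S in Kn s | [forall Q in Kn r, (Q \subset S) ==> (Q \notin processed_at r s rs t)]].

End Cliques.

From mathcomp Require Import all_boot zify.

Set Implicit Arguments.
Unset Strict Implicit.

(* Throughout set-k, delta(X) is at least the number of K_s's in S_t containing
   X: processing R removes from this count exactly the dec_count K_s's through
   R, and the update lowers delta(X) by at most that much.  Moreover kappa is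
   nondecreasing along the run.  Let t be the first time a K_r of a nucleus SS
   is processed.  Then SS is contained in S_t, so
   kappa(R_t) = delta(R_t) >= sdeg SS R_t >= k, whereas t < t_k would give
   kappa(R_t) <= kappa(R_(t_k - 1)) < k. *)

Section SetK.
Variables (T : finType) (e : rel T) (r s : nat).

Definition live (P : {set {set T}}) : {set {set T}} :=
  [set S in Kn e s | [forall Q in Kn e r, (Q \subset S) ==> (Q \notin P)]].

Lemma live_sub_Kn (P : {set {set T}}) : live P \subset Kn e s.
Proof. by apply/subsetP=> S; rewrite inE => /andP[]. Qed.

Lemma subset_live (SS P : {set {set T}}) : SS \subset Kn e s ->
  (forall Q, Q \in KrOf e r SS -> Q \notin P) -> SS \subset live P.
Proof.
move=> /subsetP SS_Kn unP; apply/subsetP=> S HS; rewrite inE SS_Kn //=.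
apply/forall_inP=> Q HQ; apply/implyP=> QS; apply: unP.
by rewrite inE HQ; apply/existsP; exists S; rewrite HS.
Qed.

Lemma live_setU1 (R : {set T}) (P : {set {set T}}) : R \in Kn e r ->
  live (R |: P) = [set S in live P | ~~ (R \subset S)].
Proof.
move=> HR; apply/setP=> S; rewrite !inE; case: (_ && (_ == s)) => //=.
apply/forall_inP/andP=> [unRP | [/forall_inP unP nRS] Q HQ].
  split; last by apply/negP=> /(implyP (unRP R HR)); rewrite setU11.
  apply/forall_inP=> Q HQ; apply/implyP=> QS.
  by have /implyP/(_ QS) := unRP Q HQ; rewrite inE negb_or => /andP[].
apply/implyP=> QS; rewrite inE negb_or (implyP (unP Q HQ) QS) andbT.
by apply: contraNN nRS; rewrite inE => /eqP <-.
Qed.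

Lemma sdeg_subset (SS SS' : {set {set T}}) (X : {set T}) :
  SS \subset SS' -> sdeg SS X <= sdeg SS' X.
Proof.
move=> /subsetP sub; apply: subset_leq_card; apply/subsetP=> S.
by rewrite !inE => /andP[/sub -> ->].
Qed.

Lemma sdeg_live_setU1 (R : {set T}) (P : {set {set T}}) (X : {set T}) :
  R \in Kn e r ->
  sdeg (live (R |: P)) X + dec_count e r s P R X = sdeg (live P) X.
Proof.
move=> HR; rewrite /sdeg /dec_count live_setU1 // addnC.
rewrite -(cardsID [set S : {set T} | R \subset S]
                  [set S in live P | X \subset S]).
congr (_ + _); apply: eq_card=> S; rewrite !inE !andbA;
  by case: (R \subset S); case: (X \subset S); rewrite ?andbT ?andbF.
Qed.

Lemma sdeg_live_step (R : {set T}) (P : {set {set T}}) (d : {set T} -> nat)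
    (X : {set T}) :
  R \in Kn e r -> sdeg (live P) X <= d X ->
  sdeg (live (R |: P)) X <= step e r s P d R X.
Proof.
move=> HR le_dX; have := sdeg_live_setU1 P X HR; rewrite /step.
by case: ifP => _ Hsum; [apply: leq_trans (leq_maxr _ _) | ]; lia.
Qed.

Lemma step_ge_pivot (P : {set {set T}}) (d : {set T} -> nat) (R R' : {set T}) :
  d R <= d R' -> d R <= step e r s P d R R'.
Proof. by rewrite /step; case: ifP => // _ _; apply: leq_maxl. Qed.

End SetK.

Section Run.
Variables (T : finType) (e : rel T) (r s : nat) (rs : seq {set T}).
Hypothesis run : valid_run e r s rs.

Lemma state_after_rcons (pre : seq {set T}) (R : {set T}) :
  state_after e r s (rcons pre R) =
  (R |: (state_after e r s pre).1,
   step e r s (state_after e r s pre).1 (state_after e r s pre).2 R).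
Proof. by rewrite /state_after foldl_rcons. Qed.

Lemma state_after_processed (pre : seq {set T}) :
  (state_after e r s pre).1 = [set R in pre].
Proof.
elim/last_ind: pre => [|pre R IH]; first by apply/setP=> Q; rewrite !inE.
by rewrite state_after_rcons /= IH; apply/setP=> Q; rewrite !inE mem_rcons inE.
Qed.

Lemma processed_atE (t : nat) : processed_at e r s rs t = [set R in take t rs].
Proof. exact: state_after_processed. Qed.

Lemma delta_at_succ (t : nat) : t < size rs ->
  delta_at e r s rs t.+1 =
  step e r s (processed_at e r s rs t) (delta_at e r s rs t) (nth set0 rs t).
Proof.
by move=> lt_t; rewrite /delta_at (take_nth set0 lt_t) state_after_rcons.
Qed.

Lemma processed_at_succ (t : nat) : t < size rs ->
  processed_at e r s rs t.+1 = nth set0 rs t |: processed_at e r s rs t.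
Proof.
by move=> lt_t; rewrite /processed_at (take_nth set0 lt_t) state_after_rcons.
Qed.

Lemma nth_run_Kn (t : nat) : t < size rs -> nth set0 rs t \in Kn e r.
Proof. by case: run => _ [run_Kn _] lt_t; rewrite -run_Kn mem_nth. Qed.

Lemma sdeg_live_le_delta (t : nat) (X : {set T}) : t <= size rs ->
  sdeg (live e r s (processed_at e r s rs t)) X <= delta_at e r s rs t X.
Proof.
elim: t X => [|t IH] X le_t.
  by rewrite /delta_at take0; apply/sdeg_subset/live_sub_Kn.
rewrite delta_at_succ // processed_at_succ //.
by apply: sdeg_live_step; [apply: nth_run_Kn | apply: IH; apply: ltnW].
Qed.

Lemma kappa_leSn (t : nat) : t.+1 < size rs ->
  kappa e r s rs t <= kappa e r s rs t.+1.
Proof.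
case: run => uniq_rs [_ run_min] lt_Sn; have lt_t := ltnW lt_Sn.
have unprocessed : nth set0 rs t.+1 \notin processed_at e r s rs t.
  by rewrite processed_atE inE in_take ?mem_nth // index_uniq // ltnNge leqnSn.
rewrite /kappa delta_at_succ //; apply: step_ge_pivot.
exact: run_min (nth_run_Kn lt_Sn) unprocessed.
Qed.

Lemma kappa_homo (t1 t2 : nat) : t1 <= t2 -> t2 < size rs ->
  kappa e r s rs t1 <= kappa e r s rs t2.
Proof.
move=> le12 lt2; apply: (@homo_leq_in nat [pred t | t < size rs] _ leq) => //.
- exact: leq_trans.
- by move=> i j _ lt_j k /andP[_ lt_kj]; apply: ltn_trans lt_j.
- by move=> t _; apply: kappa_leSn.
- exact: leq_ltn_trans lt2.
Qed.

Lemma first_processed_KrOf (SS : {set {set T}}) (Q : {set T}) (t : nat) :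
  SS \subset Kn e s -> Q \in KrOf e r SS -> Q \in processed_at e r s rs t ->
  exists t0, [/\ t0 < t, nth set0 rs t0 \in KrOf e r SS &
                 SS \subset live e r s (processed_at e r s rs t0)].
Proof.
case: run => _ [run_Kn _] SS_Kn QK.
have KrOf_rs R : R \in KrOf e r SS -> R \in rs by rewrite run_Kn inE => /andP[].
pose hit t0 := nth set0 rs t0 \in KrOf e r SS.
have hit_index R : R \in KrOf e r SS -> hit (index R rs).
  by move=> RK; rewrite /hit nth_index ?KrOf_rs.
rewrite processed_atE inE in_take ?KrOf_rs // => lt_Qt.
have [t0 hit_t0 min_t0] := ex_minnP (ex_intro hit _ (hit_index Q QK)).
exists t0; split=> //.
  exact: leq_ltn_trans (min_t0 _ (hit_index Q QK)) lt_Qt.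
apply: subset_live => // R RK; rewrite processed_atE inE in_take ?KrOf_rs //.
by rewrite -leqNgt; apply: min_t0; apply: hit_index.
Qed.

End Run.

Theorem claim3 (T : finType) (e : rel T) (e_sym : symmetric e) (e_irr : irreflexive e)
    (r s : nat) (r_pos : 0 < r) (r_lt_s : r < s)
    (rs : seq {set T}) (Hrun : valid_run e r s rs)
    (k : nat) (k_pos : 0 < k) (tk : nat) (Htk : is_transition e r s rs k tk)
    (SS : {set {set T}}) (Hnuc : is_nucleus e k r s SS) :
  SS \subset S_at e r s rs tk.
Proof.
case: Hnuc => [[SS_Kn SS_deg _] _]; case: Htk => [lt_tk [_ before_tk]].
apply: subset_live => // Q QK.
apply/negP=> /(first_processed_KrOf Hrun SS_Kn QK).
case=> t [lt_t RK SS_live]; set R := nth set0 rs t in RK.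
have kappa_t_ge_k : k <= kappa e r s rs t.
  apply: leq_trans (SS_deg R RK) _; apply: leq_trans (sdeg_subset R SS_live) _.
  by apply: sdeg_live_le_delta; rewrite // ltnW // (ltn_trans lt_t).
have kappa_pred_lt_k : kappa e r s rs tk.-1 < k.
  by case: before_tk => // tk0; rewrite tk0 in lt_t.
have le_t_pred : t <= tk.-1 by rewrite -ltnS (ltn_predK lt_t).
have := kappa_homo Hrun le_t_pred (leq_ltn_trans (leq_pred tk) lt_tk).
by rewrite leqNgt (leq_trans kappa_pred_lt_k kappa_t_ge_k).
Qed.
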